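(* Let $\beta=\beta_n>0$, $p_1=p_1(n)\ge n$, $p_2=p_2(n)\ge n$, $p=p_1+p_2$, and suppose that as $n\to\infty$, $n/p_1\to0$, $p_1/p_2\to\sigma\in[0,\infty)$ and $\beta n\to\infty$. Then $$\log A_n^{p_1,p_2}=\frac{\beta p_1}{2}\log\frac{p}{p_1}+\frac{\beta p_2}{2}\log\frac{p}{p_2}+\frac{\beta(n-1)}{2}\log\frac{p}{n}+\frac12\log(\beta p_1)+\frac12\beta n+o(\beta n).$$
   Context: $$A_n^{p_1,p_2}=\frac{\Gamma(1+\frac\beta2)\Gamma(\frac{\beta p}{2})\Gamma(\frac{\beta(p-1)}{2})}{\Gamma(1+\frac{\beta n}{2})\Gamma(\frac{\beta p_1}{2})\Gamma(\frac{\beta p_2}{2})\Gamma(\frac{\beta(p-n)}{2})}.$$ *)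

From Stdlib Require Import Reals.
From Coquelicot Require Import Coquelicot.
Open Scope R_scope.

Definition Gamma (x : R) : R :=
  RInt_gen (fun t => Rpower t (x - 1) * exp (- t))
           (at_right 0) (Rbar_locally p_infty).

Definition A_const (beta : R) (n p1 p2 : nat) : R :=
  let p := INR p1 + INR p2 in
  (Gamma (1 + beta / 2) * Gamma (beta * p / 2) * Gamma (beta * (p - 1) / 2))
  / (Gamma (1 + beta * INR n / 2) * Gamma (beta * INR p1 / 2)
     * Gamma (beta * INR p2 / 2) * Gamma (beta * (p - INR n) / 2)).

From Stdlib Require Import Reals Lra.
From Coquelicot Require Import Coquelicot.
Open Scope R_scope.

(* For y >= 1, ln Gamma(y) = (y - 1/2) ln y - y + O(1) with an explicit constant.  For
   y = x + 1 >= 2 this is Laplace's method done by hand: the exponent x ln t - t of the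
   integrand t^x e^-t stays below the tent x ln x - x + 1/4 - |t - x| / (4 sqrt x), whose
   integral is 8 sqrt x e^(x ln x - x + 1/4), and above x ln x - x - 1 on [x, x + sqrt x].
   Hence ln A is, up to 7 * O(1), an explicit combination of the approximations
   (y - 1/2) ln y - y.  Their linear parts cancel, and bounding the remaining logarithms of
   ratios by 1 - v/u <= ln (u/v) <= u/v - 1 leaves an error
   O(1 + beta ln n + ln (beta n) + beta + beta n^2 / p1), which is o(beta n) because
   beta n -> oo and n / p1 -> 0. *)

Lemma ln_le_sub_1 u : 0 < u -> ln u <= u - 1.
Proof.
  intros Hu. pose proof (exp_ineq1_le (ln u)) as H. rewrite exp_ln in H; lra.
Qed.

Lemma ln_ge_0 x : 1 <= x -> 0 <= ln x.
Proof. intros Hx. rewrite <- ln_1. apply ln_le; lra. Qed.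

Lemma exp_le_exp x y : x <= y -> exp x <= exp y.
Proof. intros [H|H]; [left; apply exp_increasing | right; subst]; auto. Qed.

Lemma ln_sub_bounds u v : 0 < v <= u -> 1 - v / u <= ln u - ln v <= u / v - 1.
Proof.
  intros Hvu.
  pose proof (ln_le_sub_1 (v / u) ltac:(apply Rdiv_lt_0_compat; lra)) as Hvu'.
  pose proof (ln_le_sub_1 (u / v) ltac:(apply Rdiv_lt_0_compat; lra)) as Huv.
  rewrite ln_div in Hvu', Huv by lra. lra.
Qed.

Lemma ln_sqrt x : 0 < x -> ln (sqrt x) = ln x / 2.
Proof.
  intros Hx. pose proof (sqrt_lt_R0 x Hx) as Hs.
  rewrite <- (sqrt_sqrt x) at 2 by lra. rewrite ln_mult by lra. field.
Qed.

Lemma ln_half_mul b y : 0 < b -> 0 < y -> ln (b * y / 2) = ln (b / 2) + ln y.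
Proof. intros Hb Hy. rewrite <- ln_mult by lra. f_equal. field. Qed.

Definition gamma_kernel (x t : R) : R := Rpower t x * exp (- t).

Lemma gamma_kernel_exp x t : 0 < t -> gamma_kernel x t = exp (x * ln t - t).
Proof. intros Ht. unfold gamma_kernel, Rpower. rewrite <- exp_plus. f_equal; ring. Qed.

Lemma gamma_kernel_pos x t : 0 < gamma_kernel x t.
Proof. apply Rmult_lt_0_compat; apply exp_pos. Qed.

Lemma ex_RInt_gamma_kernel x a b : 0 < a -> 0 < b -> ex_RInt (gamma_kernel x) a b.
Proof.
  intros Ha Hb. apply (@ex_RInt_continuous R_CompleteNormedModule). intros t Ht.
  assert (0 < Rmin a b) by (apply Rmin_pos; lra).
  apply (@ex_derive_continuous R_AbsRing R_NormedModule).
  unfold gamma_kernel, Rpower. auto_derive. lra.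
Qed.

Lemma RInt_gamma_kernel_ge_0 x a b : 0 < a <= b -> 0 <= RInt (gamma_kernel x) a b.
Proof.
  intros Hab. apply RInt_ge_0; [lra | apply ex_RInt_gamma_kernel; lra |].
  intros; left; apply gamma_kernel_pos.
Qed.

Lemma RInt_gamma_kernel_mono x a c d b : 0 < a <= c -> c <= d <= b ->
  RInt (gamma_kernel x) c d <= RInt (gamma_kernel x) a b.
Proof.
  intros Hac Hdb.
  rewrite <- (RInt_Chasles (gamma_kernel x) a c b) by (apply ex_RInt_gamma_kernel; lra).
  rewrite <- (RInt_Chasles (gamma_kernel x) c d b) by (apply ex_RInt_gamma_kernel; lra).
  pose proof (RInt_gamma_kernel_ge_0 x a c ltac:(lra)).
  pose proof (RInt_gamma_kernel_ge_0 x d b ltac:(lra)).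
  change plus with Rplus; simpl. lra.
Qed.

Lemma Rabs_RInt_gamma_kernel x c d : 0 < c -> 0 < d ->
  Rabs (RInt (gamma_kernel x) c d) = RInt (gamma_kernel x) (Rmin c d) (Rmax c d).
Proof.
  intros Hc Hd. destruct (Rle_dec c d) as [Hcd|Hdc].
  - pose proof (RInt_gamma_kernel_ge_0 x c d ltac:(lra)).
    rewrite Rmin_left, Rmax_right, Rabs_right; lra.
  - rewrite Rmin_right, Rmax_left by lra.
    rewrite <- (opp_RInt_swap (gamma_kernel x) d c) by (apply ex_RInt_gamma_kernel; lra).
    pose proof (RInt_gamma_kernel_ge_0 x d c ltac:(lra)).
    change opp with Ropp; simpl. rewrite Rabs_Ropp, Rabs_right; lra.
Qed.

Lemma is_RInt_exp_affine k m c d : k <> 0 ->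
  is_RInt (fun t => exp (k * t + m)) c d ((exp (k * d + m) - exp (k * c + m)) / k).
Proof.
  intros Hk.
  replace ((exp (k * d + m) - exp (k * c + m)) / k)
    with (minus (exp (k * d + m) / k) (exp (k * c + m) / k))
    by (unfold minus, plus, opp; simpl; field; auto).
  apply (@is_RInt_derive R_CompleteNormedModule (fun t => exp (k * t + m) / k)).
  - intros t _. auto_derive; auto. field. auto.
  - intros t _. apply (@ex_derive_continuous R_AbsRing R_NormedModule). auto_derive. auto.
Qed.

Lemma RInt_le_exp_affine f k m c d : c <= d -> k <> 0 -> ex_RInt f c d ->
  (forall t, c < t < d -> f t <= exp (k * t + m)) ->
  RInt f c d <= (exp (k * d + m) - exp (k * c + m)) / k.
Proof.
  intros Hcd Hk Hf Hle.
  exact (is_RInt_le _ _ c d _ _ Hcd (RInt_correct f c d Hf) (is_RInt_exp_affine k m c d Hk) Hle).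
Qed.

Lemma RInt_const_le f v c d : c <= d -> ex_RInt f c d ->
  (forall t, c < t < d -> v <= f t) -> (d - c) * v <= RInt f c d.
Proof.
  intros Hcd Hf Hle.
  exact (is_RInt_le _ _ c d _ _ Hcd (is_RInt_const c d v) (RInt_correct f c d Hf) Hle).
Qed.

Lemma RInt_gamma_kernel_tail x m c d :
  (forall t, 0 < t -> gamma_kernel x t <= exp (- / 2 * t + m)) -> 0 < c <= d ->
  RInt (gamma_kernel x) c d <= 2 * exp (- / 2 * c + m).
Proof.
  intros Hm Hcd.
  pose proof (RInt_le_exp_affine (gamma_kernel x) (- / 2) m c d ltac:(lra) ltac:(lra)
    (ex_RInt_gamma_kernel x c d ltac:(lra) ltac:(lra)) ltac:(intros t Ht; apply Hm; lra)).
  pose proof (exp_pos (- / 2 * d + m)).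
  replace ((exp (- / 2 * d + m) - exp (- / 2 * c + m)) / - / 2)
    with (2 * exp (- / 2 * c + m) - 2 * exp (- / 2 * d + m)) in H by field.
  lra.
Qed.

Lemma gamma_kernel_le_exp_half x : 0 <= x ->
  exists m, forall t, 0 < t -> gamma_kernel x t <= exp (- / 2 * t + m).
Proof.
  intros Hx. destruct (Req_dec x 0) as [->|Hx0].
  - exists 0. intros t Ht. rewrite gamma_kernel_exp by lra. apply exp_le_exp. lra.
  - (* [x ln t <= x ln (2x) + t/2 - x], from [ln (t / 2x) <= t / 2x - 1] *)
    exists (x * ln (2 * x) - x). intros t Ht. rewrite gamma_kernel_exp by lra. apply exp_le_exp.
    pose proof (ln_le_sub_1 (t / (2 * x)) ltac:(apply Rdiv_lt_0_compat; lra)) as H.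
    rewrite ln_div in H by lra.
    apply (Rmult_le_compat_l x) in H; [|lra].
    replace (x * (t / (2 * x) - 1)) with (t / 2 - x) in H by (field; lra). lra.
Qed.

Lemma gamma_kernel_le_1 x t : 0 <= x -> 0 < t <= 1 -> gamma_kernel x t <= 1.
Proof.
  intros Hx Ht. rewrite gamma_kernel_exp, <- exp_0 by lra. apply exp_le_exp.
  assert (ln t <= 0) by (rewrite <- ln_1; apply ln_le; lra). nra.
Qed.

Lemma RInt_gamma_kernel_head x c d : 0 <= x -> 0 < c -> c <= d <= 1 ->
  RInt (gamma_kernel x) c d <= d - c.
Proof.
  intros Hx Hc Hcd.
  pose proof (is_RInt_le _ _ c d _ _ ltac:(lra)
    (RInt_correct _ c d (ex_RInt_gamma_kernel x c d ltac:(lra) ltac:(lra)))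
    (is_RInt_const c d 1) ltac:(intros t Ht; apply gamma_kernel_le_1; lra)) as H.
  unfold scal in H; simpl in H; unfold mult in H; simpl in H. lra.
Qed.

Lemma Rabs_RInt_gamma_kernel_head x d a a' : 0 <= x -> d <= 1 -> 0 < a < d -> 0 < a' < d ->
  Rabs (RInt (gamma_kernel x) a' a) <= d.
Proof.
  intros Hx Hd Ha Ha'. rewrite Rabs_RInt_gamma_kernel by lra.
  pose proof (Rmin_pos a' a ltac:(lra) ltac:(lra)).
  pose proof (Rmax_lub_lt a' a d ltac:(lra) ltac:(lra)).
  pose proof (Rmin_Rmax a' a).
  pose proof (RInt_gamma_kernel_head x (Rmin a' a) (Rmax a' a) Hx ltac:(lra) ltac:(lra)). lra.
Qed.

Lemma Rabs_RInt_gamma_kernel_tail x m M b b' :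
  (forall t, 0 < t -> gamma_kernel x t <= exp (- / 2 * t + m)) -> 0 < M -> M < b -> M < b' ->
  Rabs (RInt (gamma_kernel x) b b') <= 2 * exp (- / 2 * M + m).
Proof.
  intros Hm HM Hb Hb'. rewrite Rabs_RInt_gamma_kernel by lra.
  pose proof (Rmin_glb_lt b b' M ltac:(lra) ltac:(lra)).
  pose proof (Rmin_Rmax b b').
  pose proof (RInt_gamma_kernel_tail x m (Rmin b b') (Rmax b b') Hm ltac:(lra)).
  pose proof (exp_le_exp (- / 2 * Rmin b b' + m) (- / 2 * M + m) ltac:(lra)). lra.
Qed.

Definition gamma_filter := filter_prod (at_right 0) (Rbar_locally p_infty).

Lemma gamma_filter_box d M : 0 < d -> gamma_filter (fun ab => 0 < fst ab < d /\ M < snd ab).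
Proof.
  intros Hd. apply (Filter_prod _ _ _ (fun a => 0 < a < d) (fun b => M < b)).
  - exists (mkposreal d Hd). intros a Ha Ha0.
    change (Rabs (a - 0) < d) in Ha. rewrite Rminus_0_r, Rabs_right in Ha; lra.
  - exists M. auto.
  - intros; simpl; auto.
Qed.

Lemma gamma_filter_proper : ProperFilter gamma_filter.
Proof. unfold gamma_filter. exact _. Qed.

Lemma ex_lim_RInt_gamma_kernel x : 0 <= x ->
  exists l, filterlim (fun ab => RInt (gamma_kernel x) (fst ab) (snd ab)) gamma_filter (locally l).
Proof.
  intros Hx. destruct (gamma_kernel_le_exp_half x Hx) as [m Hm].
  apply (filterlim_locally_cauchy (FF := gamma_filter_proper)).
  intros eps. pose proof (cond_pos eps) as Heps.
  (* near [0] the kernel is at most [1], near [+oo] it has an integrable exponential tail *)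
  set (d := Rmin 1 (eps / 4)).
  assert (Hd : 0 < d <= 1 /\ d <= eps / 4)
    by (unfold d; split; [split; [apply Rmin_pos|apply Rmin_l] | apply Rmin_r]; lra).
  set (M := Rmax 1 (2 * (m - ln (eps / 8)))).
  assert (HM : 1 <= M /\ 2 * (m - ln (eps / 8)) <= M) by (split; [apply Rmax_l | apply Rmax_r]).
  assert (Htail : 2 * exp (- / 2 * M + m) <= eps / 4).
  { pose proof (exp_le_exp (- / 2 * M + m) (ln (eps / 8)) ltac:(lra)).
    rewrite exp_ln in H by lra. lra. }
  exists (fun ab => 0 < fst ab < d /\ M < snd ab). split; [apply gamma_filter_box; lra|].
  intros [a b] [a' b'] [Ha Hb] [Ha' Hb']; simpl in *.
  change (Rabs (RInt (gamma_kernel x) a' b' - RInt (gamma_kernel x) a b) < eps).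
  rewrite <- (RInt_Chasles (gamma_kernel x) a' a b'), <- (RInt_Chasles (gamma_kernel x) a b b')
    by (apply ex_RInt_gamma_kernel; lra).
  change plus with Rplus; simpl.
  replace (RInt (gamma_kernel x) a' a + (RInt (gamma_kernel x) a b + RInt (gamma_kernel x) b b')
           - RInt (gamma_kernel x) a b)
    with (RInt (gamma_kernel x) a' a + RInt (gamma_kernel x) b b') by ring.
  pose proof (Rabs_RInt_gamma_kernel_head x d a a' Hx ltac:(lra) ltac:(lra) ltac:(lra)).
  pose proof (Rabs_RInt_gamma_kernel_tail x m M b b' Hm ltac:(lra) Hb Hb').
  pose proof (Rabs_triang (RInt (gamma_kernel x) a' a) (RInt (gamma_kernel x) b b')). lra.
Qed.

Lemma Gamma_lim y : 1 <= y ->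
  filterlim (fun ab => RInt (gamma_kernel (y - 1)) (fst ab) (snd ab)) gamma_filter
    (locally (Gamma y)).
Proof.
  intros Hy. destruct (ex_lim_RInt_gamma_kernel (y - 1) ltac:(lra)) as [l Hl].
  replace (Gamma y) with l; [exact Hl|].
  symmetry. unfold Gamma. apply is_RInt_gen_unique.
  apply (filterlimi_lim_ext_loc (fun ab => RInt (gamma_kernel (y - 1)) (fst ab) (snd ab)));
    [|exact Hl].
  eapply filter_imp; [|apply (gamma_filter_box 1 0); lra].
  intros [a b] [Ha Hb]; simpl in *. apply RInt_correct, ex_RInt_gamma_kernel; lra.
Qed.

Lemma Gamma_bounds y lo hi d M : 1 <= y -> 0 < d ->
  (forall a b, 0 < a < d -> M < b -> lo <= RInt (gamma_kernel (y - 1)) a b <= hi) ->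
  lo <= Gamma y <= hi.
Proof.
  intros Hy Hd Hbound.
  set (I := fun ab : R * R => RInt (gamma_kernel (y - 1)) (fst ab) (snd ab)).
  assert (Hbox : gamma_filter (fun ab => lo <= I ab <= hi)).
  { eapply filter_imp; [|apply (gamma_filter_box d M Hd)].
    intros [a b] [Ha Hb]; apply Hbound; auto. }
  pose proof (Gamma_lim y Hy) as Hlim. fold I in Hlim.
  split.
  - apply (filterlim_le (F := gamma_filter) (fun _ => lo) I lo (Gamma y));
      [| apply filterlim_const | exact Hlim].
    eapply filter_imp; [|exact Hbox]. intros ab H; apply H.
  - apply (filterlim_le (F := gamma_filter) I (fun _ => hi) (Gamma y) hi);
      [| exact Hlim | apply filterlim_const].
    eapply filter_imp; [|exact Hbox]. intros ab H; apply H.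
Qed.

Lemma log_kernel_le_envelope x t : 1 <= x -> 0 < t ->
  x * ln t - t <= x * ln x - x + / 4 - Rabs (t - x) / (4 * sqrt x).
Proof.
  intros Hx Ht.
  set (r := sqrt x). set (s := sqrt t).
  assert (Hr : 1 <= r) by (unfold r; rewrite <- sqrt_1; apply sqrt_le_1_alt; lra).
  assert (Hs : 0 < s) by (apply sqrt_lt_R0; lra).
  assert (Ex : x = r * r) by (unfold r; rewrite sqrt_sqrt; lra).
  assert (Et : t = s * s) by (unfold s; rewrite sqrt_sqrt; lra).
  (* [ln (s / r) <= s / r - 1] gives [x ln t - t <= x ln x - x - (s - r)^2] *)
  assert (Hlog : x * (ln t - ln x) <= 2 * r * (s - r)).
  { pose proof (ln_le_sub_1 (s / r) ltac:(apply Rdiv_lt_0_compat; lra)) as H.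
    rewrite ln_div in H by lra.
    assert (Lt : ln t = 2 * ln s) by (rewrite Et, ln_mult by lra; ring).
    assert (Lx : ln x = 2 * ln r) by (rewrite Ex, ln_mult by lra; ring).
    rewrite Lt, Lx, Ex.
    apply (Rmult_le_compat_l (2 * r * r)) in H; [|nra].
    replace (2 * r * r * (s / r - 1)) with (2 * r * (s - r)) in H by (field; lra). nra. }
  assert (Habs : Rabs (t - x) <= r + 4 * r * ((s - r) * (s - r))).
  { rewrite Et, Ex. destruct (Rle_dec r s) as [Hrs|Hsr].
    - rewrite Rabs_right by nra.
      assert (0 <= r * (3 * (s - r) * (s - r) - 2 * (s - r) + 1))
        by (apply Rmult_le_pos; [|pose proof (Rle_0_sqr (s - r - / 3)); unfold Rsqr in *]; nra).
      assert (0 <= (r - 1) * ((s - r) * (s - r))) by (apply Rmult_le_pos; nra).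
      nra.
    - rewrite Rabs_left by nra.
      assert (0 <= r * (4 * (r - s) * (r - s) - 2 * (r - s) + 1))
        by (apply Rmult_le_pos; [|pose proof (Rle_0_sqr (r - s - / 4)); unfold Rsqr in *]; nra).
      nra. }
  assert (Hdiv : Rabs (t - x) / (4 * r) <= / 4 + (s - r) * (s - r)).
  { apply (Rmult_le_reg_r (4 * r)); [lra|].
    replace (Rabs (t - x) / (4 * r) * (4 * r)) with (Rabs (t - x)) by (field; lra). nra. }
  fold r. rewrite Et, Ex in *. nra.
Qed.

Lemma log_kernel_ge_near_peak x t : 1 <= x -> x <= t <= x + sqrt x ->
  x * ln x - x - 1 <= x * ln t - t.
Proof.
  intros Hx Ht.
  pose proof (sqrt_sqrt x ltac:(lra)) as Hs. pose proof (sqrt_pos x) as Hs0.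
  (* [x ln (t / x) >= x (1 - x / t)], so the loss is at most [(t - x)^2 / t <= x / t <= 1] *)
  pose proof (ln_sub_bounds t x ltac:(lra)) as [H _].
  apply (Rmult_le_compat_l x) in H; [|lra].
  replace (x * (1 - x / t)) with (t - x - (t - x) * (t - x) / t) in H by (field; lra).
  assert ((t - x) * (t - x) / t <= 1).
  { apply (Rmult_le_reg_r t); [lra|]. unfold Rdiv. rewrite Rmult_assoc, Rinv_l by lra. nra. }
  lra.
Qed.

Lemma RInt_gamma_kernel_le_laplace x a b : 1 <= x -> 0 < a <= x -> x <= b ->
  RInt (gamma_kernel x) a b <= 8 * sqrt x * exp (x * ln x - x + / 4).
Proof.
  intros Hx Ha Hb.
  set (c := x * ln x - x + / 4). set (k := / (4 * sqrt x)).
  assert (Hsx : 1 <= sqrt x) by (rewrite <- sqrt_1; apply sqrt_le_1_alt; lra).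
  assert (Hk : 0 < k) by (apply Rinv_0_lt_compat; lra).
  assert (Hkinv : / k = 4 * sqrt x) by (unfold k; rewrite Rinv_inv; auto).
  assert (Henv : forall t, 0 < t -> gamma_kernel x t <= exp (c - k * Rabs (t - x))).
  { intros t Ht. rewrite gamma_kernel_exp by lra. apply exp_le_exp.
    pose proof (log_kernel_le_envelope x t Hx Ht).
    unfold c, k. unfold Rdiv in H. lra. }
  assert (Hleft : RInt (gamma_kernel x) a x <= exp c / k).
  { eapply Rle_trans.
    - apply (RInt_le_exp_affine _ k (c - k * x) a x);
        [lra | lra | apply ex_RInt_gamma_kernel; lra |].
      intros t Ht. eapply Rle_trans; [apply Henv; lra|].
      apply exp_le_exp. rewrite Rabs_left by lra. lra.
    - replace (k * x + (c - k * x)) with c by ring.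
      pose proof (exp_pos (k * a + (c - k * x))).
      apply Rmult_le_compat_r; [left; apply Rinv_0_lt_compat|]; lra. }
  assert (Hright : RInt (gamma_kernel x) x b <= exp c / k).
  { eapply Rle_trans.
    - apply (RInt_le_exp_affine _ (- k) (c + k * x) x b);
        [lra | lra | apply ex_RInt_gamma_kernel; lra |].
      intros t Ht. eapply Rle_trans; [apply Henv; lra|].
      apply exp_le_exp. rewrite Rabs_right by lra. lra.
    - replace (- k * x + (c + k * x)) with c by ring.
      pose proof (exp_pos (- k * b + (c + k * x))).
      replace ((exp (- k * b + (c + k * x)) - exp c) / - k)
        with ((exp c - exp (- k * b + (c + k * x))) / k) by (field; lra).
      apply Rmult_le_compat_r; [left; apply Rinv_0_lt_compat|]; lra. }
  rewrite <- (RInt_Chasles (gamma_kernel x) a x b) by (apply ex_RInt_gamma_kernel; lra).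
  change plus with Rplus; simpl.
  unfold Rdiv in Hleft, Hright. rewrite Hkinv in Hleft, Hright. lra.
Qed.

Lemma RInt_gamma_kernel_ge_laplace x a b : 1 <= x -> 0 < a <= x -> x + sqrt x <= b ->
  sqrt x * exp (x * ln x - x - 1) <= RInt (gamma_kernel x) a b.
Proof.
  intros Hx Ha Hb. pose proof (sqrt_pos x).
  eapply Rle_trans; [|apply (RInt_gamma_kernel_mono x a x (x + sqrt x) b); lra].
  replace (sqrt x) with (x + sqrt x - x) at 1 by ring.
  apply RInt_const_le; [lra | apply ex_RInt_gamma_kernel; lra |].
  intros t Ht. rewrite gamma_kernel_exp by lra.
  apply exp_le_exp, log_kernel_ge_near_peak; lra.
Qed.

Lemma RInt_gamma_kernel_le_4 x a b : 0 <= x <= 1 -> 0 < a <= b -> RInt (gamma_kernel x) a b <= 4.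
Proof.
  intros Hx Hab.
  (* [t^x <= 1 + t <= 2 exp (t / 2)] *)
  assert (Hm : forall t, 0 < t -> gamma_kernel x t <= exp (- / 2 * t + ln 2)).
  { intros t Ht. rewrite exp_plus, exp_ln by lra. unfold gamma_kernel, Rpower.
    assert (Hpow : exp (x * ln t) <= 1 + t).
    { destruct (Rle_dec t 1) as [Ht1|Ht1].
      - assert (ln t <= 0) by (rewrite <- ln_1; apply ln_le; lra).
        pose proof (exp_le_exp (x * ln t) 0 ltac:(nra)). rewrite exp_0 in *. lra.
      - pose proof (ln_ge_0 t ltac:(lra)).
        pose proof (exp_le_exp (x * ln t) (ln t) ltac:(nra)). rewrite exp_ln in *; lra. }
    pose proof (exp_ineq1_le (/ 2 * t)).
    assert (Hsplit : exp (- t) = exp (- / 2 * t) * exp (- / 2 * t))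
      by (rewrite <- exp_plus; f_equal; field).
    assert (Hinv : exp (/ 2 * t) * exp (- / 2 * t) = 1)
      by (rewrite <- exp_plus, <- exp_0; f_equal; field).
    pose proof (exp_pos (- / 2 * t)). pose proof (exp_pos (x * ln t)).
    rewrite Hsplit. nra. }
  pose proof (RInt_gamma_kernel_tail x (ln 2) a b Hm Hab).
  pose proof (exp_le_exp (- / 2 * a + ln 2) (ln 2) ltac:(lra)).
  rewrite exp_ln in * by lra. lra.
Qed.

Lemma RInt_gamma_kernel_ge_exp_m2 x a b : 0 <= x -> 0 < a <= 1 -> 2 <= b ->
  exp (-2) <= RInt (gamma_kernel x) a b.
Proof.
  intros Hx Ha Hb.
  eapply Rle_trans; [|apply (RInt_gamma_kernel_mono x a 1 2 b); lra].
  replace (exp (-2)) with ((2 - 1) * exp (-2)) by ring.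
  apply RInt_const_le; [lra | apply ex_RInt_gamma_kernel; lra |].
  intros t Ht. rewrite gamma_kernel_exp by lra. apply exp_le_exp.
  pose proof (ln_ge_0 t ltac:(lra)). nra.
Qed.

Definition stirling_approx (y : R) : R := (y - / 2) * ln y - y.

Lemma ln_Gamma_large y : 2 <= y -> 0 < Gamma y /\ Rabs (ln (Gamma y) - stirling_approx y) <= 20.
Proof.
  intros Hy. set (x := y - 1). set (L := x * ln x - x).
  assert (Hx : 1 <= x) by (unfold x; lra).
  assert (Hsx : 1 <= sqrt x) by (rewrite <- sqrt_1; apply sqrt_le_1_alt; lra).
  assert (HG : sqrt x * exp (L - 1) <= Gamma y <= 8 * sqrt x * exp (L + / 4)).
  { apply (Gamma_bounds y _ _ 1 (x + sqrt x)); [lra | lra |]. intros a b Ha Hb. split.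
    - apply (RInt_gamma_kernel_ge_laplace x); lra.
    - apply (RInt_gamma_kernel_le_laplace x); lra. }
  assert (Hlo : 0 < sqrt x * exp (L - 1)) by (apply Rmult_lt_0_compat; [lra | apply exp_pos]).
  split; [lra|].
  assert (Hln : ln (sqrt x * exp (L - 1)) <= ln (Gamma y) <= ln (8 * sqrt x * exp (L + / 4)))
    by (split; apply ln_le; lra).
  rewrite !ln_mult, !ln_exp, ln_sqrt in Hln by (try apply exp_pos; lra).
  assert (ln 8 <= 7) by (pose proof (ln_le_sub_1 8); lra).
  (* [stirling_approx (x + 1) - (L + ln x / 2) = (x + 1/2) ln (1 + 1/x) - 1] *)
  pose proof (ln_sub_bounds (x + 1) x ltac:(lra)) as Hratio.
  replace ((x + 1) / x - 1) with (/ x) in Hratio by (field; lra).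
  replace (1 - x / (x + 1)) with (/ (x + 1)) in Hratio by (field; lra).
  pose proof (Rinv_0_lt_compat (x + 1) ltac:(lra)).
  assert (Hshift : 0 <= (x + / 2) * (ln (x + 1) - ln x) <= 3 / 2).
  { split; [apply Rmult_le_pos; lra|].
    apply (Rle_trans _ ((x + / 2) * / x)); [apply Rmult_le_compat_l; lra|].
    apply (Rmult_le_reg_r x); [lra|]. field_simplify; lra. }
  unfold stirling_approx. replace y with (x + 1) in Hln |- * by (unfold x; ring).
  unfold L in Hln. apply Rabs_le. split; lra.
Qed.

Lemma ln_Gamma_small y : 1 <= y <= 2 ->
  0 < Gamma y /\ Rabs (ln (Gamma y) - stirling_approx y) <= 20.
Proof.
  intros Hy.
  assert (HG : exp (-2) <= Gamma y <= 4).
  { apply (Gamma_bounds y _ _ 1 2); [lra | lra |]. intros a b Ha Hb. split.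
    - apply RInt_gamma_kernel_ge_exp_m2; lra.
    - apply RInt_gamma_kernel_le_4; lra. }
  pose proof (exp_pos (-2)).
  split; [lra|].
  assert (Hln : ln (exp (-2)) <= ln (Gamma y) <= ln 4) by (split; apply ln_le; lra).
  rewrite ln_exp in Hln.
  assert (ln 4 <= 3) by (pose proof (ln_le_sub_1 4); lra).
  pose proof (ln_ge_0 y ltac:(lra)). pose proof (ln_le_sub_1 y ltac:(lra)).
  unfold stirling_approx. apply Rabs_le. split; nra.
Qed.

Lemma ln_Gamma_stirling y : 1 <= y -> 0 < Gamma y /\ Rabs (ln (Gamma y) - stirling_approx y) <= 20.
Proof.
  intros Hy. destruct (Rle_dec 2 y).
  - apply ln_Gamma_large; lra.
  - apply ln_Gamma_small; lra.
Qed.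

Definition stirling_A (b N q1 q2 : R) : R :=
  stirling_approx (1 + b / 2) + stirling_approx (b * (q1 + q2) / 2)
  + stirling_approx (b * (q1 + q2 - 1) / 2) - stirling_approx (1 + b * N / 2)
  - stirling_approx (b * q1 / 2) - stirling_approx (b * q2 / 2)
  - stirling_approx (b * (q1 + q2 - N) / 2).

Definition A_main (b N q1 q2 : R) : R :=
  b * q1 / 2 * ln ((q1 + q2) / q1) + b * q2 / 2 * ln ((q1 + q2) / q2)
  + b * (N - 1) / 2 * ln ((q1 + q2) / N) + / 2 * ln (b * q1) + / 2 * b * N.

Definition A_error (b N q1 s : R) : R :=
  143 + s + b / 2 * ln N + ln (b * N) + b / 2 + b / 2 * (N * N / q1).

Lemma ln_A_const_stirling b n p1 p2 : 0 < b -> (1 <= n)%nat -> (n <= p1)%nat -> (n <= p2)%nat ->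
  2 <= b * INR n ->
  Rabs (ln (A_const b n p1 p2) - stirling_A b (INR n) (INR p1) (INR p2)) <= 140.
Proof.
  intros Hb Hn H1 H2 HbN.
  apply le_INR in Hn, H1, H2. simpl in Hn.
  set (N := INR n) in *. set (q1 := INR p1) in *. set (q2 := INR p2) in *.
  destruct (ln_Gamma_stirling (1 + b / 2) ltac:(lra)) as [G1 E1].
  destruct (ln_Gamma_stirling (b * (q1 + q2) / 2) ltac:(nra)) as [G2 E2].
  destruct (ln_Gamma_stirling (b * (q1 + q2 - 1) / 2) ltac:(nra)) as [G3 E3].
  destruct (ln_Gamma_stirling (1 + b * N / 2) ltac:(nra)) as [G4 E4].
  destruct (ln_Gamma_stirling (b * q1 / 2) ltac:(nra)) as [G5 E5].
  destruct (ln_Gamma_stirling (b * q2 / 2) ltac:(nra)) as [G6 E6].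
  destruct (ln_Gamma_stirling (b * (q1 + q2 - N) / 2) ltac:(nra)) as [G7 E7].
  unfold A_const, stirling_A. fold N q1 q2.
  rewrite ln_div, !ln_mult by (repeat apply Rmult_lt_0_compat; auto).
  apply Rabs_le_between in E1, E2, E3, E4, E5, E6, E7.
  apply Rabs_le. lra.
Qed.

Lemma stirling_A_sub_A_main b N q1 q2 : 0 < b -> 0 < q1 -> 0 < q2 -> 0 < N < q1 + q2 ->
  1 < q1 + q2 ->
  stirling_A b N q1 q2 - A_main b N q1 q2 =
    - (b / 2 * (N - 1) * (ln (1 + b * N / 2) - ln (b / 2) - ln N))
    - (b / 2 + / 2) * (ln (1 + b * N / 2) - ln (1 + b / 2))
    - / 2 * (ln (q1 + q2) - ln q2)
    - (b / 2 * (q1 + q2 - 1) - / 2) * (ln (q1 + q2) - ln (q1 + q2 - 1))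
    + (b / 2 * (q1 + q2 - N) - / 2) * (ln (q1 + q2) - ln (q1 + q2 - N))
    - / 2 * ln 2 - b / 2 * N.
Proof.
  intros Hb Hq1 Hq2 HN Hp.
  assert (Lbq1 : ln (b * q1) = ln 2 + (ln (b / 2) + ln q1)).
  { rewrite <- ln_half_mul, <- ln_mult by nra. f_equal. field. }
  unfold stirling_A, A_main, stirling_approx.
  rewrite Lbq1, !ln_half_mul, !(ln_div (q1 + q2)) by lra.
  (* the linear parts of the seven approximations cancel *)
  field.
Qed.

Lemma mul_ln_one_add_inv_bounds b N : 0 < b -> 1 <= N ->
  0 <= b / 2 * (N - 1) * (ln (1 + b * N / 2) - ln (b / 2) - ln N) <= 1.
Proof.
  intros Hb HN. set (u := b * N / 2).
  assert (Hu : 0 < u) by (unfold u; nra).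
  pose proof (ln_sub_bounds (1 + u) u ltac:(lra)) as [Hlo Hhi].
  unfold u in Hlo, Hhi. rewrite ln_half_mul in Hlo, Hhi by lra. fold u in Hlo, Hhi.
  replace (1 - u / (1 + u)) with (/ (1 + u)) in Hlo by (field; lra).
  replace ((1 + u) / u - 1) with (/ u) in Hhi by (field; lra).
  pose proof (Rinv_0_lt_compat (1 + u) ltac:(lra)).
  set (v := ln (1 + u) - ln (b / 2) - ln N).
  assert (Hv : 0 <= v <= / u) by (unfold v; lra).
  split; [apply Rmult_le_pos; nra|].
  apply (Rle_trans _ (u * v)); [unfold u; nra|].
  apply (Rle_trans _ (u * / u)); [apply Rmult_le_compat_l; lra|].
  rewrite Rinv_r; lra.
Qed.

Lemma ln_one_add_half_mul_bounds b N : 0 < b -> 1 <= N -> 2 <= b * N ->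
  0 <= (b / 2 + / 2) * (ln (1 + b * N / 2) - ln (1 + b / 2)) <= b / 2 * ln N + / 2 * ln (b * N).
Proof.
  intros Hb HN HbN.
  assert (H1 : 0 <= ln (1 + b / 2)) by (apply ln_ge_0; lra).
  assert (Hmono : ln (1 + b / 2) <= ln (1 + b * N / 2)) by (apply ln_le; nra).
  assert (HN' : ln (1 + b * N / 2) <= ln N + ln (1 + b / 2))
    by (rewrite <- ln_mult by lra; apply ln_le; nra).
  assert (HbN' : ln (1 + b * N / 2) <= ln (b * N)) by (apply ln_le; lra).
  split; [apply Rmult_le_pos; lra|]. nra.
Qed.

Lemma mul_ln_sub_shift_bounds c m p : 0 <= c -> 0 < m -> 2 * m <= p ->
  0 <= ln p - ln (p - m) <= 1 /\ 0 <= c * (p - m) * (ln p - ln (p - m))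
  /\ c * m - c * (m * m / p) <= c * (p - m) * (ln p - ln (p - m)) <= c * m.
Proof.
  intros Hc Hm Hp.
  pose proof (ln_sub_bounds p (p - m) ltac:(lra)) as [Hlo Hhi].
  replace (p / (p - m) - 1) with (m / (p - m)) in Hhi by (field; lra).
  replace (1 - (p - m) / p) with (m / p) in Hlo by (field; lra).
  assert (m / (p - m) <= 1) by (apply (Rmult_le_reg_r (p - m)); [lra|]; field_simplify; lra).
  assert (0 <= m / p) by (apply Rdiv_le_0_compat; lra).
  split; [lra|]. split; [apply Rmult_le_pos; nra|]. split.
  - replace (c * m - c * (m * m / p)) with (c * (p - m) * (m / p)) by (field; lra).
    apply Rmult_le_compat_l; nra.
  - apply (Rle_trans _ (c * (p - m) * (m / (p - m)))); [apply Rmult_le_compat_l; nra|].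
    right. field. lra.
Qed.

Lemma stirling_A_error b N q1 q2 s : 0 < b -> 1 <= N <= q1 -> N <= q2 -> 2 <= b * N ->
  q1 / q2 <= s ->
  Rabs (stirling_A b N q1 q2 - A_main b N q1 q2) <= A_error b N q1 s - 140.
Proof.
  intros Hb HN Hq2 HbN Hs.
  rewrite stirling_A_sub_A_main by lra.
  pose proof (mul_ln_one_add_inv_bounds b N Hb ltac:(lra)).
  pose proof (ln_one_add_half_mul_bounds b N Hb ltac:(lra) HbN).
  pose proof (mul_ln_sub_shift_bounds (b / 2) 1 (q1 + q2) ltac:(lra) ltac:(lra) ltac:(lra)).
  pose proof (mul_ln_sub_shift_bounds (b / 2) N (q1 + q2) ltac:(lra) ltac:(lra) ltac:(lra)).
  assert (Hsq : b / 2 * (N * N / (q1 + q2)) <= b / 2 * (N * N / q1)).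
  { apply Rmult_le_compat_l; [lra|]. apply Rmult_le_compat_l; [nra|].
    apply Rinv_le_contravar; lra. }
  assert (Hq : 0 <= ln (q1 + q2) - ln q2 <= s).
  { pose proof (ln_sub_bounds (q1 + q2) q2 ltac:(lra)) as [Hlo Hhi].
    replace ((q1 + q2) / q2 - 1) with (q1 / q2) in Hhi by (field; lra).
    pose proof (Rdiv_lt_0_compat q2 (q1 + q2) ltac:(lra) ltac:(lra)).
    assert (q2 / (q1 + q2) <= 1)
      by (apply (Rmult_le_reg_r (q1 + q2)); [lra|]; field_simplify; lra).
    lra. }
  assert (0 <= ln 2 <= 1) by (split; [apply ln_ge_0 | pose proof (ln_le_sub_1 2)]; lra).
  assert (0 <= ln (b * N)) by (apply ln_ge_0; lra).
  unfold A_error. apply Rabs_le. lra.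
Qed.

Lemma ln_A_const_error b n p1 p2 s : 0 < b -> (1 <= n)%nat -> (n <= p1)%nat -> (n <= p2)%nat ->
  2 <= b * INR n -> INR p1 / INR p2 <= s ->
  Rabs (ln (A_const b n p1 p2) - A_main b (INR n) (INR p1) (INR p2))
    <= A_error b (INR n) (INR p1) s.
Proof.
  intros Hb Hn H1 H2 HbN Hs.
  pose proof (ln_A_const_stirling b n p1 p2 Hb Hn H1 H2 HbN) as Hgamma.
  apply le_INR in Hn, H1, H2. simpl in Hn.
  pose proof (stirling_A_error b (INR n) (INR p1) (INR p2) s Hb ltac:(lra) H2 HbN Hs) as Hstir.
  pose proof (Rabs_triang (ln (A_const b n p1 p2) - stirling_A b (INR n) (INR p1) (INR p2))
    (stirling_A b (INR n) (INR p1) (INR p2) - A_main b (INR n) (INR p1) (INR p2))).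
  replace (ln (A_const b n p1 p2) - A_main b (INR n) (INR p1) (INR p2))
    with ((ln (A_const b n p1 p2) - stirling_A b (INR n) (INR p1) (INR p2))
          + (stirling_A b (INR n) (INR p1) (INR p2) - A_main b (INR n) (INR p1) (INR p2))) by ring.
  lra.
Qed.

Lemma is_lim_seq_ln_div (u : nat -> R) :
  is_lim_seq u p_infty -> is_lim_seq (fun n => ln (u n) / u n) 0.
Proof. intros Hu. exact (filterlim_comp _ _ _ u (fun y => ln y / y) _ _ _ Hu is_lim_div_ln_p). Qed.

Lemma A_error_div_lim (beta : nat -> R) (p1 : nat -> nat) s :
  (forall n, 0 < beta n) -> (forall n, (n <= p1 n)%nat) ->
  is_lim_seq (fun n => INR n / INR (p1 n)) 0 -> is_lim_seq (fun n => beta n * INR n) p_infty ->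
  is_lim_seq (fun n => A_error (beta n) (INR n) (INR (p1 n)) s / (beta n * INR n)) 0.
Proof.
  intros hbeta hp1 hnp1 hbn.
  apply (is_lim_seq_ext_loc
    (fun n => (143 + s) * / (beta n * INR n) + / 2 * (ln (INR n) / INR n)
              + ln (beta n * INR n) / (beta n * INR n) + / 2 * / INR n
              + / 2 * (INR n / INR (p1 n)))).
  - exists 1%nat. intros n Hn.
    pose proof (hbeta n). pose proof (le_INR _ _ Hn). pose proof (le_INR _ _ (hp1 n)). simpl in *.
    unfold A_error. field. lra.
  - replace 0 with ((143 + s) * 0 + / 2 * 0 + 0 + / 2 * 0 + / 2 * 0) by ring.
    repeat apply is_lim_seq_plus'.
    + apply (is_lim_seq_scal_l _ _ 0), (is_lim_seq_inv _ p_infty hbn). discriminate.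
    + apply (is_lim_seq_scal_l _ _ 0), (is_lim_seq_ln_div INR), is_lim_seq_INR.
    + apply is_lim_seq_ln_div, hbn.
    + apply (is_lim_seq_scal_l _ _ 0), (is_lim_seq_inv _ p_infty is_lim_seq_INR). discriminate.
    + apply (is_lim_seq_scal_l _ _ 0), hnp1.
Qed.

Lemma Rabs_div_le x y e : 0 < y -> Rabs x <= e -> Rabs (x / y) <= e / y.
Proof.
  intros Hy Hx. unfold Rdiv. rewrite Rabs_mult, Rabs_inv, (Rabs_right y) by lra.
  apply Rmult_le_compat_r; [left; apply Rinv_0_lt_compat|]; lra.
Qed.

Theorem lemma3 (beta : nat -> R) (p1 p2 : nat -> nat) (sigma : R)
  (hbeta : forall n, 0 < beta n)
  (hp1 : forall n, (n <= p1 n)%nat)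
  (hp2 : forall n, (n <= p2 n)%nat)
  (hnp1 : is_lim_seq (fun n => INR n / INR (p1 n)) 0)
  (hsigma : 0 <= sigma)
  (hp1p2 : is_lim_seq (fun n => INR (p1 n) / INR (p2 n)) sigma)
  (hbn : is_lim_seq (fun n => beta n * INR n) p_infty) :
  is_lim_seq
    (fun n =>
       let b := beta n in
       let q1 := INR (p1 n) in
       let q2 := INR (p2 n) in
       let p := q1 + q2 in
       (ln (A_const b n (p1 n) (p2 n))
        - (b * q1 / 2 * ln (p / q1) + b * q2 / 2 * ln (p / q2)
           + b * (INR n - 1) / 2 * ln (p / INR n)
           + / 2 * ln (b * q1) + / 2 * b * INR n))
       / (b * INR n))
    0.
Proof.
  set (e := fun n => A_error (beta n) (INR n) (INR (p1 n)) (sigma + 1) / (beta n * INR n)).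
  pose proof (A_error_div_lim beta p1 (sigma + 1) hbeta hp1 hnp1 hbn) as He. fold e in He.
  apply (is_lim_seq_le_le_loc (fun n => - e n) _ e); [| | exact He].
  2: { replace (Finite 0) with (Rbar_opp 0) by (simpl; f_equal; ring).
       apply -> is_lim_seq_opp. exact He. }
  assert (Hbn : eventually (fun n => 2 <= beta n * INR n)) by (apply hbn; exists 2; intros; lra).
  assert (Hratio : eventually (fun n => INR (p1 n) / INR (p2 n) <= sigma + 1)).
  { apply (hp1p2 (fun y => y <= sigma + 1)). exists (mkposreal 1 Rlt_0_1). intros y Hy.
    apply Rabs_lt_between' in Hy. simpl in Hy. lra. }
  assert (Hn : eventually (fun n => (1 <= n)%nat)) by (exists 1%nat; auto).
  eapply filter_imp; [|exact (filter_and _ _ Hbn (filter_and _ _ Hratio Hn))].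
  intros n [HbN [Hs Hn1]]. cbv beta zeta.
  apply Rabs_le_between, Rabs_div_le; [lra|].
  exact (ln_A_const_error (beta n) n (p1 n) (p2 n) (sigma + 1)
           (hbeta n) Hn1 (hp1 n) (hp2 n) HbN Hs).
Qed.
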